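(* Let $c$ and $n$ be odd positive integers with $n>c>\frac{n}{2}$. There is a bijection between the set of hit-huggers in $S_n$ whose last letter is $n$ and the set of standard Young tableaux of rectangular shape with $2$ rows and $n-c-1$ columns, such that the parity of the Latin reading word of each tableau equals the parity of its corresponding hit-hugger.
   Context: Permutations are written in one-line notation. The order permutation (standardization) of a word $u$ of distinct positive integers of length $\ell$ is the unique $\pi\in S_\ell$ with $\pi_i<\pi_j$ iff $u_i<u_j$. A hit in a permutation is a contiguous subword of length $c$ whose order permutation is a cyclic shift of $12\cdots c$; a hit starts at the position of its first letter. A hit-hugger in $S_n$ is a permutation with exactly two hits, one starting at position $1$ and one starting at position $n-c+1$. Young tableaux are standard, in English notation, with entries $1,\ldots,2(n-c-1)$; the Latin reading word of a tableau is obtained by reading its entries row by row from top to bottom, each row left to right, and its parity is its sign as a permutation of $\{1,\ldots,2(n-c-1)\}$. *)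

From mathcomp Require Import all_boot.
Set Implicit Arguments. Unset Strict Implicit. Unset Printing Implicit Defensive.

(* Words are sequences of natural numbers; a permutation in S_n in one-line
   notation is a word that is a rearrangement of [:: 1; 2; ...; n]. *)

Definition std (u : seq nat) : seq nat :=
  [seq (count (fun y => y < x) u).+1 | x <- u].

(* A hit of length c starting at (0-indexed) position i, i.e. at the
   1-indexed position i+1: the contiguous subword of length c starting there
   standardizes to a cyclic shift of 12...c. *)
Definition is_hit (c : nat) (w : seq nat) (i : nat) : bool :=
  (i + c <= size w) &&
  [exists k : 'I_c, std (take c (drop i w)) == rot k (iota 1 c)].

Definition hit_starts (c : nat) (w : seq nat) : seq nat :=
  [seq i <- iota 0 (size w) | is_hit c w i].

Definition is_perm_word (n : nat) (w : seq nat) : bool := perm_eq w (iota 1 n).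

(* Hit-hugger in S_n: exactly two hits, starting at positions 1 and n-c+1
   (0-indexed: 0 and n-c). *)
Definition hit_hugger (n c : nat) (w : seq nat) : bool :=
  is_perm_word n w && (hit_starts c w == [:: 0; n - c]).

(* Number of inversions of a word; the sign of a permutation (in one-line
   notation) is (-1)^inversions, so its parity is odd (inversions w). *)
Definition inversions (w : seq nat) : nat :=
  \sum_(i < size w) \sum_(j < size w) ((i < j) && (nth 0 w j < nth 0 w i)).

Definition parity (w : seq nat) : bool := odd (inversions w).

(* Fillings of the 2-row, m-column rectangular Young diagram: T (r, j) is the
   entry in row r (0 = top), column j (0 = leftmost), English notation. *)
Definition filling (m : nat) := {ffun 'I_2 * 'I_m -> nat}.

Definition latin_reading (m : nat) (T : filling m) : seq nat :=
  [seq T (ord0, j) | j <- enum 'I_m] ++ [seq T (ord_max, j) | j <- enum 'I_m].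

Definition is_syt (m : nat) (T : filling m) : bool :=
  [&& perm_eq (latin_reading T) (iota 1 (2 * m)),
      [forall r : 'I_2, forall j : 'I_m, forall j' : 'I_m,
         (j < j') ==> (T (r, j) < T (r, j'))] &
      [forall j : 'I_m, T (ord0, j) < T (ord_max, j)]].

From mathcomp Require Import all_boot zify.
Set Implicit Arguments. Unset Strict Implicit. Unset Printing Implicit Defensive.

(* Put m = n - c - 1 and k = 2c - n; both are positive and m is odd.  A
   hit-hugger w ending in n is exactly a word
     (k+1), (k+1)+t_1, ..., (k+1)+t_m, 1, ..., k, (k+1)+b_1, ..., (k+1)+b_m, n
   where t and b are the rows of a standard Young tableau of shape (m, m).
   The hit starting at m + 2 ends with n, so it is increasing; the hit at 1 is
   then forced to break exactly after the top block, since any other break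
   yields a third hit or a descent inside the increasing tail; and t_j < b_j,
   for otherwise the window starting at j + 1 would be a hit.  Conversely such
   words have exactly the two required hits.  The map w |-> (t, b) is the
   bijection, and its parity statement holds because the letters k + 1 and
   (k+1)+t_j each invert with the k small letters, which adds k (m + 1), an
   even number, to the inversions of t b. *)

Lemma count_ltn_split (u : seq nat) x y : x <= y ->
  count (fun z => z < y) u = count (fun z => z < x) u + count (fun z => x <= z < y) u.
Proof.
move=> le_xy; elim: u => //= z u ->.
case: (ltnP z x) => h1; case: (ltnP z y) => h2 /=; lia.
Qed.

Lemma count_ltn_mono (u : seq nat) x y : x \in u ->
  (count (fun z => z < x) u < count (fun z => z < y) u) = (x < y).
Proof.
move=> xu; case: (ltnP x y) => hxy.
- rewrite (count_ltn_split u (ltnW hxy)) -{1}[count _ u]addn0 ltn_add2l -has_count.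
  by apply/hasP; exists x => //; rewrite leqnn.
- rewrite (count_ltn_split u hxy); lia.
Qed.

Lemma nth_std (u : seq nat) p : p < size u ->
  nth 0 (std u) p = (count (fun z => z < nth 0 u p) u).+1.
Proof. by move=> hp; rewrite /std (nth_map 0). Qed.

Lemma ltn_nth_std (u : seq nat) p q : p < size u -> q < size u ->
  (nth 0 (std u) p < nth 0 (std u) q) = (nth 0 u p < nth 0 u q).
Proof. by move=> hp hq; rewrite !nth_std // ltnS count_ltn_mono // mem_nth. Qed.

Lemma std_cat_ltn (x y : seq nat) : allrel ltn x y ->
  std (x ++ y) = std x ++ map (addn (size x)) (std y).
Proof.
move=> /allrelP lt_xy; rewrite /std map_cat -map_comp; congr (_ ++ _).
- apply/eq_in_map => a ax /=; rewrite count_cat -[X in _ = X]addn0; congr (_ + _).+1.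
  rewrite -(count_pred0 y); apply: eq_in_count => b yb.
  by apply/negbTE; rewrite -leqNgt; apply: ltnW; exact: lt_xy.
- apply/eq_in_map => a ay /=; rewrite count_cat addnS; congr (_ + _).+1.
  by rewrite -[size x]count_predT; apply: eq_in_count => b xb; exact: lt_xy.
Qed.

Lemma std_cat_gtn (x y : seq nat) : allrel (fun a b => b < a) x y ->
  std (x ++ y) = map (addn (size y)) (std x) ++ std y.
Proof.
move=> /allrelP gt_xy; rewrite /std map_cat -map_comp; congr (_ ++ _).
- apply/eq_in_map => a ax /=; rewrite count_cat addnS addnC; congr (_ + _).+1.
  by rewrite -[size y]count_predT; apply: eq_in_count => b yb; exact: gt_xy.
- apply/eq_in_map => a ay /=; rewrite count_cat; congr _.+1.
  rewrite -[X in _ = X]add0n; congr (_ + _); rewrite -(count_pred0 x).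
  by apply: eq_in_count => b xb; apply/negbTE; rewrite -leqNgt ltnW // gt_xy.
Qed.

Lemma std_pairwise_ltn (x : seq nat) : pairwise ltn x -> std x = iota 1 (size x).
Proof.
elim: x => // a x IH /= /andP [ha hx].
rewrite -cat1s std_cat_ltn /=; last by rewrite allrel1l.
by rewrite IH // ltnn -iotaDl.
Qed.

Lemma std_cat_rot (x y : seq nat) :
  pairwise ltn x -> pairwise ltn y -> allrel (fun a b => b < a) x y ->
  std (x ++ y) = rot (size y) (iota 1 (size (x ++ y))).
Proof.
move=> px py gt_xy; rewrite std_cat_gtn // !std_pairwise_ltn // size_cat addnC iotaD.
have := rot_size_cat (iota 1 (size y)) (iota (1 + size y) (size x)).
by rewrite size_iota => ->; rewrite [1 + _]addnC iotaDl.
Qed.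

(* [rot_rank c k p] is the 0-based value at position [p] of [rot k (iota 0 c)]. *)
Definition rot_rank (c k p : nat) := if p < c - k then k + p else p - (c - k).

Lemma nth_rot_iota c k p : k <= c -> p < c ->
  nth 0 (rot k (iota 1 c)) p = (rot_rank c k p).+1.
Proof.
move=> hk hp; rewrite /rot /rot_rank nth_cat size_drop size_iota.
case: ifP => h.
- by rewrite nth_drop nth_iota; lia.
- by rewrite nth_take ?nth_iota; lia.
Qed.

Definition increasing_on (f : nat -> nat) l r :=
  forall p q, l <= p -> p < q -> q < r -> f p < f q.

Lemma increasing_on_step (f : nat -> nat) l r :
  (forall p, l <= p -> p.+1 < r -> f p < f p.+1) -> increasing_on f l r.
Proof.
move=> step p q hl; elim: q => // q IH hpq hq.
rewrite ltnS leq_eqVlt in hpq; case/orP: hpq => [/eqP e|hpq]; first by subst q; exact: step.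
by apply: ltn_trans (IH hpq (ltnW hq)) _; apply: step; lia.
Qed.

Lemma increasing_on_glue f l1 r1 l2 r2 :
  increasing_on f l1 r1 -> increasing_on f l2 r2 -> l1 <= l2 -> l2 < r1 -> r1 <= r2 ->
  increasing_on f l1 r2.
Proof.
move=> inc1 inc2 h1 h2 h3 p q hp hpq hq.
case: (ltnP q r1) => hq1; first exact: inc1.
case: (leqP l2 p) => hp2; first by apply: inc2 => //; lia.
by apply: (ltn_trans (inc1 p l2 _ _ _)); try lia; apply: inc2; lia.
Qed.

Lemma increasing_on_leq f l r p q : increasing_on f l r ->
  l <= p -> p <= q -> q < r -> f p <= f q.
Proof. by move=> inc hp; rewrite leq_eqVlt => /orP [/eqP -> //|hpq hq]; rewrite ltnW ?inc. Qed.

Lemma size_window (w : seq nat) c i : i + c <= size w -> size (take c (drop i w)) = c.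
Proof. by move=> h; rewrite size_take size_drop; case: ltnP; lia. Qed.

Lemma nth_window (w : seq nat) c i p : p < c ->
  nth 0 (take c (drop i w)) p = nth 0 w (i + p).
Proof. by move=> hp; rewrite nth_take // nth_drop. Qed.

Lemma is_hit_rank (w : seq nat) c i : is_hit c w i ->
  i + c <= size w /\ exists2 k, k < c & forall p q, p < c -> q < c ->
    (nth 0 w (i + p) < nth 0 w (i + q)) = (rot_rank c k p < rot_rank c k q).
Proof.
case/andP=> hs /existsP [k /eqP hk]; split => //; exists k => // p q hp hq.
rewrite -(nth_window _ _ hp) -(nth_window _ _ hq) -ltn_nth_std ?size_window //.
by rewrite hk !nth_rot_iota // ltnW.
Qed.

Lemma is_hit_two_runs (w : seq nat) c i s :
  i + c <= size w -> 0 < s <= c ->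
  increasing_on (fun p => nth 0 w (i + p)) 0 s ->
  increasing_on (fun p => nth 0 w (i + p)) s c ->
  (forall p q, p < s -> s <= q -> q < c -> nth 0 w (i + q) < nth 0 w (i + p)) ->
  is_hit c w i.
Proof.
move=> hs /andP [s0 sc] inc1 inc2 gt12; rewrite /is_hit hs /=.
set W := take c (drop i w).
have sW : size W = c by exact: size_window.
have sx : size (take s W) = s by rewrite size_take sW; case: ltnP; lia.
have sy : size (drop s W) = c - s by rewrite size_drop sW.
have nx p : p < s -> nth 0 (take s W) p = nth 0 w (i + p).
  by move=> hp; rewrite nth_take // nth_window //; lia.
have ny p : p < c - s -> nth 0 (drop s W) p = nth 0 w (i + (s + p)).
  by move=> hp; rewrite nth_drop nth_window //; lia.
have : std W = rot (c - s) (iota 1 c).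
  rewrite -{1}(cat_take_drop s W) std_cat_rot ?sy ?size_cat ?sx; first by rewrite sy subnKC.
  - apply/(pairwiseP 0) => p q; rewrite !inE sx => hp hq hpq.
    by rewrite !nx //; apply: inc1.
  - apply/(pairwiseP 0) => p q; rewrite !inE sy => hp hq hpq.
    by rewrite !ny //; apply: inc2; lia.
  - apply/allrelP => a b /(nthP 0) [p hp <-] /(nthP 0) [q hq <-].
    by move: hp hq; rewrite sx sy => hp hq; rewrite nx // ny //; apply: gt12; lia.
have hk : c - s < c by lia.
by move=> e; apply/existsP; exists (Ordinal hk); rewrite e.
Qed.

Lemma is_hit_increasing (w : seq nat) c i : i + c <= size w -> 0 < c ->
  increasing_on (fun p => nth 0 w (i + p)) 0 c -> is_hit c w i.
Proof.
move=> hs c0 inc; apply: (is_hit_two_runs (s := c)) => //; first by rewrite c0 leqnn.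
- by move=> p q hp hpq hq; lia.
- by move=> p q hp hq; lia.
Qed.

Lemma sum_nth_count (P : pred nat) (s : seq nat) :
  \sum_(j < size s) P (nth 0 s j) = count P s.
Proof. by elim: s => [|a s IH]; rewrite ?big_ord0 //= big_ord_recl -IH. Qed.

Lemma inversions_nil : inversions [::] = 0.
Proof. by rewrite /inversions big_ord0. Qed.

Lemma inversions_cons a s :
  inversions (a :: s) = count (fun x => x < a) s + inversions s.
Proof.
rewrite /inversions /= big_ord_recl /= big_ord_recl /= add0n.
rewrite (sum_nth_count (fun x => x < a)); congr (_ + _).
by apply: eq_bigr => i _; rewrite big_ord_recl.
Qed.

Definition cross_inversions (s1 s2 : seq nat) :=
  \sum_(a <- s1) count (fun x => x < a) s2.

Lemma inversions_cat s1 s2 :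
  inversions (s1 ++ s2) = inversions s1 + inversions s2 + cross_inversions s1 s2.
Proof.
elim: s1 => [|a s1 IH]; first by rewrite inversions_nil /cross_inversions big_nil addn0.
by rewrite cat_cons !inversions_cons IH /cross_inversions big_cons count_cat; lia.
Qed.

Lemma inversions_map_addn d s : inversions (map (addn d) s) = inversions s.
Proof.
elim: s => [|a s IH] //=; rewrite !inversions_cons IH count_map; congr (_ + _).
by apply: eq_count => x /=; rewrite ltn_add2l.
Qed.

Lemma inversions_pairwise_ltn s : pairwise ltn s -> inversions s = 0.
Proof.
elim: s => [|a s IH] /=; first by rewrite inversions_nil.
case/andP=> ha hs; rewrite inversions_cons IH // addn0 -(count_pred0 s).
apply: eq_in_count => x xs; apply/negbTE; rewrite -leqNgt ltnW //.
exact: (allP ha).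
Qed.

Lemma cross_inversions_catr s y1 y2 :
  cross_inversions s (y1 ++ y2) = cross_inversions s y1 + cross_inversions s y2.
Proof. by rewrite /cross_inversions -big_split; apply: eq_bigr => a _; rewrite count_cat. Qed.

Lemma cross_inversions_map_addn d s1 s2 :
  cross_inversions (map (addn d) s1) (map (addn d) s2) = cross_inversions s1 s2.
Proof.
rewrite /cross_inversions big_map; apply: eq_bigr => a _; rewrite count_map.
by apply: eq_count => x /=; rewrite ltn_add2l.
Qed.

Lemma cross_inversions_eq0 s1 s2 :
  (forall a x, a \in s1 -> x \in s2 -> a <= x) -> cross_inversions s1 s2 = 0.
Proof.
move=> le12; rewrite /cross_inversions big_seq big1 // => a ha; rewrite -(count_pred0 s2).
by apply: eq_in_count => x hx; apply/negbTE; rewrite -leqNgt; exact: le12.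
Qed.

Lemma cross_inversions_all s1 s2 :
  (forall a x, a \in s1 -> x \in s2 -> x < a) ->
  cross_inversions s1 s2 = size s1 * size s2.
Proof.
move=> gt12; rewrite /cross_inversions big_seq (eq_bigr (fun=> size s2)).
  by rewrite -big_seq big_const_seq count_predT iter_addn_0 mulnC.
by move=> a ha; rewrite -count_predT; apply: eq_in_count => x hx; exact: gt12.
Qed.

Definition hugger_word k n (t b : seq nat) :=
  k.+1 :: map (addn k.+1) t ++ iota 1 k ++ map (addn k.+1) b ++ [:: n].

Definition syt_rows m (t b : seq nat) : Prop :=
  [/\ size t = m, size b = m, perm_eq (t ++ b) (iota 1 (2 * m)),
      pairwise ltn t & pairwise ltn b] /\ (forall j, j < m -> nth 0 t j < nth 0 b j).

Lemma syt_rows_size m t b : syt_rows m t b -> size t = m /\ size b = m.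
Proof. by case=> -[]. Qed.

Lemma syt_rows_range m t b : syt_rows m t b -> forall a, a \in t ++ b -> 0 < a <= 2 * m.
Proof. by case=> [[_ _ tb _ _] _] a; rewrite (perm_mem tb) mem_iota; lia. Qed.

Section HuggerWord.

Variables m k n : nat.
Hypothesis n_eq : n = (2 * m + k).+2.

Lemma size_hugger_word t b : size t = m -> size b = m -> size (hugger_word k n t b) = n.
Proof. by move=> st sb; rewrite /= !size_cat !size_map size_iota st sb /=; lia. Qed.

Lemma perm_hugger_word t b :
  perm_eq (hugger_word k n t b) (iota 1 n) = perm_eq (t ++ b) (iota 1 (2 * m)).
Proof.
set S := iota 1 k ++ [:: k.+1; n].
have perm_w : perm_eq (hugger_word k n t b) (S ++ map (addn k.+1) (t ++ b)).
  by apply/permP => P; rewrite /= !count_cat /= !count_map !count_cat; lia.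
have perm_iota : perm_eq (iota 1 n) (S ++ map (addn k.+1) (iota 1 (2 * m))).
  have -> : iota 1 n = iota 1 k ++ k.+1 :: map (addn k.+1) (iota 1 (2 * m)) ++ [:: n].
    rewrite [in LHS](_ : n = k + 1 + 2 * m + 1); last lia.
    rewrite iotaD (iotaD _ (k + 1)) (iotaD _ k) -!catA /=.
    by rewrite -iotaDl; congr (_ ++ _ :: iota _ _ ++ [:: _]); lia.
  by apply/permP => P; rewrite /= !count_cat /= !count_cat /=; lia.
move: perm_w perm_iota => /permPl -> /permPr ->; rewrite perm_cat2l.
by apply/idP/idP; [apply: perm_map_inj; exact: addnI | exact: perm_map].
Qed.

Lemma inversions_hugger_word t b : size t = m -> (forall a, a \in t ++ b -> a <= 2 * m) ->
  inversions (hugger_word k n t b) = inversions (t ++ b) + k * m.+1.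
Proof.
move=> st le_tb; set T := map (addn k.+1) t; set B := map (addn k.+1) b.
have memT x : x \in T -> k < x < n.
  by case/mapP=> a ha ->; have := le_tb a; rewrite mem_cat ha => /(_ isT); lia.
have memB x : x \in B -> k < x < n.
  by case/mapP=> a ha ->; have := le_tb a; rewrite mem_cat ha orbT => /(_ isT); lia.
have memL x : x \in iota 1 k -> x <= k by rewrite mem_iota; lia.
have head : count (fun x => x < k.+1) (T ++ iota 1 k ++ B ++ [:: n]) = k.
  have none s : {in s, forall x, k < x} -> count (fun x => x < k.+1) s = 0.
    by move=> gt_s; apply/eqP; rewrite eqn0Ngt -has_count; apply/hasPn => x /gt_s; lia.
  rewrite !count_cat (none T) ?(none B) ?(none [:: n]).
  - by rewrite (eq_in_count (a2 := predT)) ?count_predT ?size_iota ?addn0.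
  - by move=> x; rewrite inE => /eqP ->; lia.
  - by move=> x /memB; lia.
  - by move=> x /memT; lia.
have crossT : cross_inversions T (iota 1 k ++ B ++ [:: n]) = k * m + cross_inversions t b.
  rewrite !cross_inversions_catr cross_inversions_map_addn cross_inversions_all; last first.
    by move=> a x /memT ? /memL; lia.
  rewrite (@cross_inversions_eq0 T) => [|a x /memT ?]; last by rewrite inE => /eqP ->; lia.
  by rewrite size_map size_iota st; lia.
have crossL : cross_inversions (iota 1 k) (B ++ [:: n]) = 0.
  apply: cross_inversions_eq0 => a x /memL ?; rewrite mem_cat inE => /orP [/memB|/eqP ->]; lia.
have crossB : cross_inversions B [:: n] = 0.
  by apply: cross_inversions_eq0 => a x /memB ?; rewrite inE => /eqP ->; lia.
have incL : pairwise ltn (iota 1 k) by rewrite -sorted_pairwise ?iota_ltn_sorted //; exact: ltn_trans.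
rewrite /hugger_word inversions_cons !inversions_cat inversions_cons inversions_nil /=.
rewrite head crossT crossL crossB (inversions_pairwise_ltn incL) !inversions_map_addn; lia.
Qed.

Lemma parity_hugger_word t b : odd m -> syt_rows m t b ->
  parity (hugger_word k n t b) = parity (t ++ b).
Proof.
move=> odd_m rows; have [[st _ _ _ _] _] := rows.
rewrite /parity inversions_hugger_word // => [|a /(syt_rows_range rows)]; last by lia.
by rewrite oddD oddM /= odd_m andbF addbF.
Qed.

End HuggerWord.

Section HuggerWordEntries.

Variables (k n : nat) (t b : seq nat).
Local Notation w := (hugger_word k n t b).

Lemma nth_hugger_word_top p : 0 < p <= size t -> nth 0 w p = k.+1 + nth 0 t p.-1.
Proof. by case: p => // p /andP [_ hp]; rewrite /= nth_cat size_map hp (nth_map 0). Qed.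

Lemma nth_hugger_word_low p : size t < p <= size t + k -> nth 0 w p = p - size t.
Proof.
case: p => // p hp; rewrite /= nth_cat size_map ifF; last lia.
by rewrite nth_cat size_iota ifT ?nth_iota; lia.
Qed.

Lemma nth_hugger_word_bottom p : size t + k < p <= size t + k + size b ->
  nth 0 w p = k.+1 + nth 0 b (p - (size t).+1 - k).
Proof.
case: p => // p hp; rewrite /= nth_cat size_map ifF; last lia.
rewrite nth_cat size_iota ifF; last lia.
by rewrite nth_cat size_map ifT ?(nth_map 0); try lia; congr (_ + nth _ _ _); lia.
Qed.

Lemma nth_hugger_word_last : nth 0 w (size t + k + size b).+1 = n.
Proof.
have -> : (size t + k + size b).+1 = (size w).-1 by rewrite /= !size_cat !size_map size_iota /=; lia.
by rewrite nth_last /= !last_cat.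
Qed.

End HuggerWordEntries.

Lemma pairwise_ltn_nth (s : seq nat) :
  pairwise ltn s -> increasing_on (nth 0 s) 0 (size s).
Proof. by move=> inc p q _ hpq hq; apply: (pairwiseP 0 inc); rewrite ?inE //; lia. Qed.

Lemma filter_iota_pair (P : pred nat) n j : 0 < j < n ->
  (forall i, i < n -> P i = (i == 0) || (i == j)) -> [seq i <- iota 0 n | P i] = [:: 0; j].
Proof.
move=> hj hP; rewrite (eq_in_filter (a2 := fun i => (i == 0) || (i == j))); last first.
  by move=> i; rewrite mem_iota => hi; apply: hP; lia.
rewrite (_ : n = 1 + j.-1 + 1 + (n - j.+1)); last lia.
rewrite !iotaD !filter_cat /= !add0n.
rewrite !(@eq_in_filter _ _ pred0) ?filter_pred0.
- by rewrite (_ : 1 + j.-1 = j) ?eqxx //; lia.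
all: by move=> i; rewrite mem_iota => hi; apply/negbTE/norP; split; apply/eqP; lia.
Qed.

Section HuggerWordHits.

Variables m k n c : nat.
Variables t b : seq nat.
Hypotheses (rows : syt_rows m t b) (m_gt0 : 0 < m) (k_gt0 : 0 < k).
Hypotheses (n_eq : n = (2 * m + k).+2) (c_eq : c = m + k + 1).

Local Notation w := (hugger_word k n t b).
Local Notation a := (nth 0 w).

Let size_t : size t = m. Proof. by case: (syt_rows_size rows). Qed.
Let size_b : size b = m. Proof. by case: (syt_rows_size rows). Qed.
Let size_w : size w = n. Proof. exact: (size_hugger_word n_eq). Qed.
Let t_range p : p < m -> 0 < nth 0 t p <= 2 * m.
Proof. by move=> hp; apply: (syt_rows_range rows); rewrite mem_cat mem_nth ?size_t. Qed.
Let b_range p : p < m -> 0 < nth 0 b p <= 2 * m.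
Proof. by move=> hp; apply: (syt_rows_range rows); rewrite mem_cat mem_nth ?size_b ?orbT. Qed.
Let t_inc : increasing_on (nth 0 t) 0 m.
Proof. by case: rows => [[_ _ _ inc _] _]; rewrite -size_t; exact: pairwise_ltn_nth. Qed.
Let b_inc : increasing_on (nth 0 b) 0 m.
Proof. by case: rows => [[_ _ _ _ inc] _]; rewrite -size_b; exact: pairwise_ltn_nth. Qed.
Let columns j : j < m -> nth 0 t j < nth 0 b j.
Proof. by case: rows => _; apply. Qed.

Let a_head : a 0 = k.+1. Proof. by []. Qed.
Let a_top p : 0 < p <= m -> a p = k.+1 + nth 0 t p.-1.
Proof. by move=> hp; rewrite nth_hugger_word_top ?size_t. Qed.
Let a_low p : m < p <= m + k -> a p = p - m.
Proof. by move=> hp; rewrite nth_hugger_word_low ?size_t. Qed.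
Let a_bottom p : m + k < p <= 2 * m + k -> a p = k.+1 + nth 0 b (p - m.+1 - k).
Proof. by move=> hp; rewrite nth_hugger_word_bottom ?size_t ?size_b //; lia. Qed.
Let a_last : a (2 * m + k).+1 = n.
Proof. by rewrite -[RHS](nth_hugger_word_last k n t b) size_t size_b addnAC addnn -mul2n. Qed.

Lemma hugger_word_hit_head : is_hit c w 0.
Proof.
apply: (is_hit_two_runs (s := m.+1)); rewrite ?size_w; try lia.
- apply: increasing_on_step => -[|p] _ hp; rewrite !add0n.
    by rewrite a_head (@a_top 1) //=; have := @t_range 0 m_gt0; lia.
  by have := @t_inc p p.+1 (leq0n _) (ltnSn _) hp; rewrite !a_top /=; lia.
- by move=> p q hp hpq hq; rewrite !add0n !a_low; lia.
- move=> p q hp hq1 hq2; rewrite !add0n a_low; try lia.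
  by case: p hp => [|p] hp; rewrite ?a_head ?a_top /=; lia.
Qed.

Lemma hugger_word_hit_tail : is_hit c w m.+1.
Proof.
apply: is_hit_increasing; rewrite ?size_w; try lia.
apply: increasing_on_step => p _ hp.
have [lt_pk|ge_pk] := ltnP p.+1 k.
  by rewrite !a_low; lia.
have [lt_pm|ge_pm] := ltnP p.+1 (m + k); last first.
  have e : m.+1 + p.+1 = (2 * m + k).+1 by lia.
  rewrite e a_last a_bottom; last lia.
  by have := @b_range (m.+1 + p - m.+1 - k); lia.
rewrite (@a_bottom (m.+1 + p.+1)); last lia.
have [eq_pk|gt_pk] := eqVneq p.+1 k.
  by rewrite a_low; lia.
rewrite a_bottom; last lia.
by rewrite ltn_add2l; apply: b_inc; lia.
Qed.

(* A hit starting inside the top block is impossible: if its rank shift is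
   zero, the window would increase across the drop from [a i > k] to
   [a (m + 1) = 1]; otherwise its first letter would exceed its last one,
   i.e. [t_(i-1) > b_(i-1)], against the column condition. *)
Lemma hugger_word_no_hit i : 0 < i <= m -> ~~ is_hit c w i.
Proof.
move=> hi; apply/negP => /is_hit_rank [_ [r hr rank]].
case: (posnP r) => [r0|r_gt0].
  have := rank 0 (m.+1 - i); rewrite r0 /rot_rank !subn0 !ifT; try lia.
  rewrite addn0 subnKC; last lia.
  by rewrite a_top ?a_low /=; try lia; have := @t_range i.-1; lia.
have := rank 0 (c - 1); rewrite /rot_rank ifT ?ifF; try lia.
rewrite addn0 (_ : i + (c - 1) = m + k + i); last lia.
rewrite a_top ?a_bottom; try lia; rewrite (_ : m + k + i - m.+1 - k = i.-1); last lia.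
by have := @columns i.-1; lia.
Qed.

Lemma hugger_word_is_hugger : hit_hugger n c w && (last 0 w == n).
Proof.
rewrite /= !last_cat eqxx andbT /hit_hugger /is_perm_word (perm_hugger_word n_eq).
have [[_ _ perm_tb _ _] _] := rows; rewrite perm_tb /hit_starts size_w.
rewrite (_ : n - c = m.+1); last lia.
apply/eqP/filter_iota_pair => [|i hi]; first lia.
have [->|i_gt0] := posnP i; first by rewrite hugger_word_hit_head.
have [le_im|gt_im] := leqP i m; first by rewrite (negbTE (hugger_word_no_hit _)); lia.
have [->|ne_im] := eqVneq i m.+1; first by rewrite hugger_word_hit_tail ?eqxx ?orbT.
transitivity false; first by apply/negbTE/negP => /andP [+ _]; rewrite size_w; lia.
by apply/esym/norP; split; apply/eqP; lia.
Qed.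

End HuggerWordHits.

Lemma pairwise_ltn_mkseq (f : nat -> nat) len :
  increasing_on f 0 len -> pairwise ltn (mkseq f len).
Proof.
move=> inc; apply/(pairwiseP 0) => p q; rewrite !inE size_mkseq => hp hq hpq.
by rewrite !nth_mkseq //; apply: inc.
Qed.

Lemma perm_iota_prefix (X Y : seq nat) N :
  perm_eq (X ++ Y) (iota 1 N) -> pairwise ltn X -> allrel ltn X Y ->
  X = iota 1 (size X).
Proof.
move=> perm_XY inc_X lt_XY.
have sorted_XY : X ++ sort leq Y = iota 1 N.
  apply: (sorted_eq leq_trans anti_leq); [|exact: iota_sorted|]; last first.
    by apply: perm_trans perm_XY; rewrite perm_cat2l perm_sort.
  rewrite (sorted_pairwise leq_trans) pairwise_cat; apply/and3P; split.
  - apply/allrelP => x y hx; rewrite mem_sort => hy; apply: ltnW.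
    exact: (allrelP lt_XY).
  - by apply: sub_pairwise inc_X => x y /ltnW.
  - by rewrite -(sorted_pairwise leq_trans) (sort_sorted leq_total).
have le_XN : size X <= N by rewrite -(size_iota 1 N) -sorted_XY size_cat leq_addr.
by rewrite -[X in X = _](take_size_cat (sort leq Y) (erefl _)) sorted_XY take_iota (minn_idPl le_XN).
Qed.

Lemma map_iota_mkseq (f : nat -> nat) s len :
  map f (iota s len) = mkseq (fun p => f (s + p)) len.
Proof. by rewrite /mkseq -{1}(addn0 s) iotaDl -map_comp. Qed.

Lemma word_blocks (w : seq nat) m k : size w = (2 * m + k).+2 ->
  w = nth 0 w 0 :: mkseq (fun p => nth 0 w p.+1) m
        ++ mkseq (fun p => nth 0 w (m.+1 + p)) k
        ++ mkseq (fun p => nth 0 w (m.+1 + k + p)) m ++ [:: nth 0 w (2 * m + k).+1].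
Proof.
move=> size_w; rewrite -{1}(mkseq_nth 0 w) size_w (_ : _.+2 = 1 + m + k + m + 1); last lia.
rewrite /mkseq !iotaD !map_cat !map_iota_mkseq -!catA /=.
by congr (_ :: _ ++ _ ++ _ ++ [:: nth _ _ _]); lia.
Qed.

Lemma hit_hugger_is_hit n c w i : hit_hugger n c w -> i < n ->
  is_hit c w i = (i == 0) || (i == n - c).
Proof.
case/andP=> perm_w /eqP starts lt_in; have := mem_filter (is_hit c w) i (iota 0 (size w)).
rewrite -/(hit_starts c w) starts mem_iota (perm_size perm_w) size_iota lt_in !inE.
by move=> ->; case: is_hit.
Qed.

Section HuggerDecomposition.

Variables (m k n c : nat) (w : seq nat).
Hypotheses (m_gt0 : 0 < m) (k_gt0 : 0 < k).
Hypotheses (n_eq : n = (2 * m + k).+2) (c_eq : c = m + k + 1).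
Hypotheses (hugger : hit_hugger n c w) (last_w : last 0 w = n).

Local Notation a := (nth 0 w).

Let perm_w : perm_eq w (iota 1 n). Proof. by case/andP: hugger. Qed.
Let size_w : size w = n. Proof. by rewrite (perm_size perm_w) size_iota. Qed.
Let a_range p : p < n -> 0 < a p <= n.
Proof.
move=> hp; have : a p \in iota 1 n by rewrite -(perm_mem perm_w) mem_nth ?size_w.
by rewrite mem_iota; lia.
Qed.
Let a_inj p q : p < n -> q < n -> a p = a q -> p = q.
Proof.
move=> hp hq /eqP; rewrite nth_uniq ?size_w ?(perm_uniq perm_w) ?iota_uniq //.
by move/eqP.
Qed.
Let a_last : a (2 * m + k).+1 = n.
Proof. by rewrite -last_w (last_nth 0) size_w n_eq. Qed.
Let a_lt_n p : p <= 2 * m + k -> a p < n.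
Proof.
move=> hp; have := a_range (p := p); have := a_inj (p := p) (q := (2 * m + k).+1).
by rewrite a_last; lia.
Qed.
Let hit i : i < n -> is_hit c w i = (i == 0) || (i == m.+1).
Proof. by move=> hi; rewrite (hit_hugger_is_hit hugger hi) (_ : n - c = m.+1) //; lia. Qed.

(* A nonzero rank shift would put the last letter n below the first one. *)
Lemma hugger_tail_increasing : increasing_on a m.+1 n.
Proof.
have : is_hit c w m.+1 by rewrite hit ?eqxx ?orbT //; lia.
case/is_hit_rank=> _ [r lt_rc rank].
have r0 : r = 0.
  apply/eqP; apply/negP => /negP r_neq0.
  have := rank (c - 1) 0; rewrite /rot_rank ifF ?ifT; try lia.
  rewrite (_ : m.+1 + (c - 1) = (2 * m + k).+1) ?a_last ?addn0; last lia.
  by have := a_lt_n (p := m.+1); lia.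
move=> p q hp hpq hq; have := rank (p - m.+1) (q - m.+1).
by rewrite /rot_rank r0 subn0 !ifT ?subnKC; try lia; move=> ->; lia.
Qed.

(* If the rank shift r of the hit at index 0 differs from k, then either the
   increasing run ending the window meets the increasing tail, which makes the
   window at index 1 (r = 0) or at index c - r (r > k) a hit, or the descent
   between the two runs falls inside the tail (0 < r < k). *)
Lemma hugger_head_runs :
  increasing_on a 0 m.+1 /\ (forall p q, p <= m -> m < q -> q < c -> a q < a p).
Proof.
have : is_hit c w 0 by rewrite hit ?eqxx //; lia.
case/is_hit_rank=> _ [r lt_rc rank].
have rank_lt p q : p < c -> q < c -> (a p < a q) = (rot_rank c r p < rot_rank c r q).
  by move=> hp hq; rewrite -(rank p q) ?add0n.
have no_increasing_hit i : 0 < i <= m -> increasing_on a i n -> False.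
  move=> hi inc; suff : is_hit c w i by rewrite hit => [/orP [] /eqP|]; lia.
  apply: is_hit_increasing; rewrite ?size_w; try lia.
  by move=> p q _ hpq hq; apply: inc; lia.
have tail := hugger_tail_increasing.
have r_eq : r = k.
  have [r0|r_gt0] := posnP r.
    exfalso; apply: (no_increasing_hit 1); first lia.
    apply: (increasing_on_glue (r1 := c) _ tail); try lia.
    by move=> p q _ hpq hq; rewrite rank_lt /rot_rank ?r0 ?subn0 ?ifT; lia.
  have [lt_rk|gt_rk|//] := ltngtP r k; exfalso.
    have := rank_lt (c - r).-1 (c - r); rewrite /rot_rank ifT ?ifF ?subnn; try lia.
    by have := tail (c - r).-1 (c - r); lia.
  apply: (no_increasing_hit (c - r)); first lia.
  apply: (increasing_on_glue (r1 := c) _ tail); try lia.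
  by move=> p q hp hpq hq; rewrite rank_lt /rot_rank ?ifF; lia.
subst r; split=> [p q _ hpq hq|p q hp hq1 hq2]; rewrite rank_lt /rot_rank; try lia.
- by rewrite !ifT; lia.
- by rewrite ifF ?ifT; lia.
Qed.

Lemma hugger_columns i : 0 < i <= m -> a i < a (m + k + i).
Proof.
move=> hi; have [head cross] := hugger_head_runs; have tail := hugger_tail_increasing.
rewrite ltn_neqAle; apply/andP; split.
  by apply/eqP => /a_inj; lia.
rewrite leqNgt; apply/negP => gt_ai.
suff : is_hit c w i by rewrite hit => [/orP [] /eqP|]; lia.
apply: (is_hit_two_runs (s := m.+1 - i)); rewrite ?size_w; try lia.
- by move=> p q _ hpq hq; apply: head; lia.
- by move=> p q hp hpq hq; apply: tail; lia.
move=> p q hp hq1 hq2.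
have := increasing_on_leq tail (p := i + q) (q := m + k + i).
by have := increasing_on_leq head (p := i) (q := i + p); lia.
Qed.

Let blocks : w = a 0 :: mkseq (fun p => a p.+1) m
    ++ mkseq (fun p => a (m.+1 + p)) k
    ++ mkseq (fun p => a (m.+1 + k + p)) m ++ [:: a (2 * m + k).+1].
Proof. by apply: word_blocks; rewrite size_w. Qed.

Let a_head_lt p : p < m -> a 0 < a p.+1.
Proof. by have [head _] := hugger_head_runs; move=> hp; apply: head; lia. Qed.

Let a_head_lt_bottom p : p < m -> a 0 < a (m.+1 + k + p).
Proof.
move=> hp; have := hugger_columns (i := p.+1); have := a_head_lt hp.
by rewrite (_ : m + k + p.+1 = m.+1 + k + p); lia.
Qed.

Lemma hugger_low_block : mkseq (fun p => a (m.+1 + p)) k = iota 1 k /\ a 0 = k.+1.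
Proof.
have [_ cross] := hugger_head_runs; have tail := hugger_tail_increasing.
set L := mkseq _ k.
set T := mkseq (fun p => a p.+1) m; set B := mkseq (fun p => a (m.+1 + k + p)) m.
have low_lt p : p \in L -> p < a 0.
  by case/mapP=> j; rewrite mem_iota => hj ->; apply: cross; lia.
have gt_high p : p \in T ++ B ++ [:: a (2 * m + k).+1] -> a 0 < p.
  rewrite !mem_cat inE => /or3P [/mapP [j]|/mapP [j]|/eqP ->]; rewrite ?mem_iota.
  - by move=> hj ->; apply: a_head_lt; lia.
  - by move=> hj ->; apply: a_head_lt_bottom; lia.
  - by rewrite a_last; apply: a_lt_n; lia.
suff /rcons_inj [-> ->] : rcons L (a 0) = rcons (iota 1 k) k.+1 by [].
have -> : rcons (iota 1 k) k.+1 = iota 1 (size (rcons L (a 0))).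
  by rewrite size_rcons size_mkseq -cats1 -[k.+1]addn1 iotaD add1n addn1.
apply: (perm_iota_prefix (Y := T ++ B ++ [:: a (2 * m + k).+1]) (N := n)).
- apply: perm_trans perm_w; rewrite [X in perm_eq _ X]blocks.
  by apply/permP => P; rewrite /= -cats1 !count_cat /= /L /T /B; lia.
- rewrite -cats1 pairwise_cat /= andbT; apply/andP; split.
    by apply/allrelP => x y /low_lt lt_x; rewrite inE => /eqP ->.
  apply: pairwise_ltn_mkseq => p q _ hpq hq; apply: tail; lia.
- apply/allrelP => x y; rewrite mem_rcons inE => /orP [/eqP ->|/low_lt lt_x] /gt_high //.
  exact: ltn_trans.
Qed.

Lemma hugger_decomposition : exists t b, syt_rows m t b /\ w = hugger_word k n t b.
Proof.
have [low a0] := hugger_low_block.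
have [head _] := hugger_head_runs; have tail := hugger_tail_increasing.
set t := mkseq (fun p => a p.+1 - k.+1) m.
set b := mkseq (fun p => a (m.+1 + k + p) - k.+1) m.
have shift_t : map (addn k.+1) t = mkseq (fun p => a p.+1) m.
  rewrite /t /mkseq -map_comp; apply/eq_in_map => p; rewrite mem_iota => hp /=.
  by rewrite subnKC // -a0 ltnW // a_head_lt.
have shift_b : map (addn k.+1) b = mkseq (fun p => a (m.+1 + k + p)) m.
  rewrite /b /mkseq -map_comp; apply/eq_in_map => p; rewrite mem_iota => hp /=.
  by rewrite subnKC // -a0 ltnW // a_head_lt_bottom.
have w_eq : w = hugger_word k n t b by rewrite {1}blocks a0 low -shift_t -shift_b a_last.
exists t, b; split=> //; split; first split.
- exact: size_mkseq.
- exact: size_mkseq.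
- by rewrite -(perm_hugger_word n_eq) -w_eq.
- apply: pairwise_ltn_mkseq => p q _ hpq hq.
  by have := head p.+1 q.+1; have := a_head_lt (p := p); lia.
- apply: pairwise_ltn_mkseq => p q _ hpq hq.
  by have := tail (m.+1 + k + p) (m.+1 + k + q); have := a_head_lt_bottom (p := p); lia.
- move=> j hj; rewrite !nth_mkseq //.
  have := hugger_columns (i := j.+1); have := a_head_lt (p := j).
  by rewrite (_ : m + k + j.+1 = m.+1 + k + j); lia.
Qed.

End HuggerDecomposition.

Section Rows.

Variable m : nat.

Definition top_row (T : filling m) := [seq T (ord0, j) | j <- enum 'I_m].
Definition bottom_row (T : filling m) := [seq T (ord_max, j) | j <- enum 'I_m].
Definition filling_of_rows (t b : seq nat) : filling m :=
  [ffun rj : 'I_2 * 'I_m => nth 0 (if rj.1 == ord0 then t else b) rj.2].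

Lemma size_top_row T : size (top_row T) = m.
Proof. by rewrite size_map size_enum_ord. Qed.

Lemma size_bottom_row T : size (bottom_row T) = m.
Proof. by rewrite size_map size_enum_ord. Qed.

Lemma nth_top_row T (j : 'I_m) : nth 0 (top_row T) j = T (ord0, j).
Proof. by rewrite (nth_map j) ?size_enum_ord // nth_ord_enum. Qed.

Lemma nth_bottom_row T (j : 'I_m) : nth 0 (bottom_row T) j = T (ord_max, j).
Proof. by rewrite (nth_map j) ?size_enum_ord // nth_ord_enum. Qed.

Lemma top_row_of_rows t b : size t = m -> top_row (filling_of_rows t b) = t.
Proof.
move=> size_t; apply: (@eq_from_nth _ 0) => [|i]; rewrite size_top_row // => hi.
by rewrite (nth_top_row _ (Ordinal hi)) ffunE.
Qed.

Lemma bottom_row_of_rows t b : size b = m -> bottom_row (filling_of_rows t b) = b.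
Proof.
move=> size_b; apply: (@eq_from_nth _ 0) => [|i]; rewrite size_bottom_row // => hi.
by rewrite (nth_bottom_row _ (Ordinal hi)) ffunE.
Qed.

Lemma ord2_cases (r : 'I_2) : r = ord0 \/ r = ord_max.
Proof. by case: r => -[|[|]] // hr; [left | right]; apply: val_inj. Qed.

Lemma rows_of_filling T : filling_of_rows (top_row T) (bottom_row T) = T.
Proof.
apply/ffunP => -[r j]; rewrite ffunE /=.
by case: (ord2_cases r) => ->; rewrite ?nth_top_row ?nth_bottom_row.
Qed.

Lemma forall_ltn_pairwise (f : 'I_m -> nat) :
  [forall j : 'I_m, forall j' : 'I_m, (j < j') ==> (f j < f j')]
  = pairwise ltn [seq f j | j <- enum 'I_m].
Proof.
have nth_f (j : 'I_m) : nth 0 [seq f j | j <- enum 'I_m] j = f j.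
  by rewrite (nth_map j) ?size_enum_ord // nth_ord_enum.
apply/forallP/(pairwiseP 0) => [inc i j|inc j].
  rewrite !inE size_map size_enum_ord => hi hj lt_ij.
  rewrite (nth_f (Ordinal hi)) (nth_f (Ordinal hj)).
  by have /forallP /(_ (Ordinal hj)) /implyP := inc (Ordinal hi); apply.
apply/forallP => j'; apply/implyP => lt_jj'.
have in_range (i : 'I_m) : nat_of_ord i \in gtn (size [seq f j | j <- enum 'I_m]).
  by rewrite inE size_map size_enum_ord.
by rewrite -!nth_f; apply: (inc j j').
Qed.

Lemma is_sytP T : is_syt T <-> syt_rows m (top_row T) (bottom_row T).
Proof.
have rows_inc : [forall r : 'I_2, forall j : 'I_m, forall j' : 'I_m,
                   (j < j') ==> (T (r, j) < T (r, j'))]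
    = pairwise ltn (top_row T) && pairwise ltn (bottom_row T).
  rewrite /top_row /bottom_row -!forall_ltn_pairwise.
  apply/forallP/andP => [inc|[inc0 inc1] r]; first by split; apply: inc.
  by case: (ord2_cases r) => ->.
have columnsP : [forall j, T (ord0, j) < T (ord_max, j)] <->
    (forall j, j < m -> nth 0 (top_row T) j < nth 0 (bottom_row T) j).
  split=> [/forallP col j hj|col]; last first.
    by apply/forallP => j; rewrite -nth_top_row -nth_bottom_row; apply: col.
  by rewrite (nth_top_row T (Ordinal hj)) (nth_bottom_row T (Ordinal hj)).
rewrite /is_syt rows_inc.
split=> [/and3P [perm /andP [inc_t inc_b] /columnsP col]|[[_ _ perm inc_t inc_b] col]].
  by split; first split; rewrite ?size_top_row ?size_bottom_row.
by apply/and3P; split; rewrite ?inc_t ?inc_b //; apply/columnsP.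
Qed.

End Rows.

Definition tableau_of_hugger m k (w : seq nat) : filling m :=
  filling_of_rows m [seq x - k.+1 | x <- take m (drop 1 w)]
                    [seq x - k.+1 | x <- take m (drop (m.+1 + k) w)].

Lemma tableau_of_hugger_word m k n t b : size t = m -> size b = m ->
  tableau_of_hugger m k (hugger_word k n t b) = filling_of_rows m t b.
Proof.
move=> size_t size_b; set T := map (addn k.+1) t; set B := map (addn k.+1) b.
have size_T : size T = m by rewrite size_map.
have size_B : size B = m by rewrite size_map.
have unshift s : [seq x - k.+1 | x <- map (addn k.+1) s] = s.
  by rewrite -map_comp map_id_in // => x _ /=; rewrite addKn.
have drop_bottom : drop (m.+1 + k) (hugger_word k n t b) = B ++ [:: n].
  by rewrite addSn /= addnC -drop_drop drop_size_cat // drop_size_cat ?size_iota.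
by rewrite /tableau_of_hugger drop_bottom /= drop0 !take_size_cat // !unshift.
Qed.

Lemma hugger_parameters n c : odd c -> odd n -> c < n -> n < 2 * c ->
  [/\ 0 < n - c - 1, 0 < 2 * c - n, odd (n - c - 1),
      n = (2 * (n - c - 1) + (2 * c - n)).+2 & c = n - c - 1 + (2 * c - n) + 1].
Proof.
move=> odd_c odd_n lt_cn lt_n2c.
have lt_c1n : c.+1 < n.
  by rewrite ltn_neqAle lt_cn andbT; apply: contraTneq odd_n => <- /=; rewrite odd_c.
have odd_m : odd (n - c - 1) by rewrite -subnDA addn1 oddB // odd_n /= negbK.
by split=> //; lia.
Qed.

Theorem lemma2p16 (n c : nat) :
  odd c -> odd n -> c < n -> n < 2 * c ->
  let HH := [pred w : seq nat | hit_hugger n c w && (last 0 w == n)] in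
  exists f : seq nat -> filling (n - c - 1),
    [/\ {in HH, forall w, is_syt (f w)},
        {in HH &, injective f},
        (forall T : filling (n - c - 1), is_syt T -> exists2 w, w \in HH & f w = T) &
        {in HH, forall w, parity (latin_reading (f w)) = parity w}].
Proof.
move=> odd_c odd_n lt_cn lt_n2c HH.
have [m_gt0 k_gt0 odd_m n_eq c_eq] := hugger_parameters odd_c odd_n lt_cn lt_n2c.
set m := n - c - 1 in m_gt0 odd_m n_eq c_eq *; set k := 2 * c - n in k_gt0 n_eq c_eq.
have decomp w : w \in HH -> exists t b, syt_rows m t b /\ w = hugger_word k n t b.
  by case/andP=> hugger /eqP; exact: (hugger_decomposition m_gt0 k_gt0 n_eq c_eq hugger).
exists (tableau_of_hugger m k); split.
- move=> w /decomp [t [b [rows ->]]]; have [st sb] := syt_rows_size rows.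
  by rewrite tableau_of_hugger_word //; apply/is_sytP; rewrite top_row_of_rows ?bottom_row_of_rows.
- move=> w1 w2 /decomp [t1 [b1 [rows1 ->]]] /decomp [t2 [b2 [rows2 ->]]].
  have [st1 sb1] := syt_rows_size rows1; have [st2 sb2] := syt_rows_size rows2.
  rewrite !tableau_of_hugger_word // => e.
  have -> : b1 = b2 by rewrite -(bottom_row_of_rows t1 sb1) e bottom_row_of_rows.
  by have -> : t1 = t2 by rewrite -(top_row_of_rows b1 st1) e top_row_of_rows.
- move=> T /is_sytP rows; exists (hugger_word k n (top_row T) (bottom_row T)).
    exact: (hugger_word_is_hugger rows m_gt0 k_gt0 n_eq c_eq).
  by rewrite tableau_of_hugger_word ?size_top_row ?size_bottom_row // rows_of_filling.
- move=> w /decomp [t [b [rows ->]]]; have [st sb] := syt_rows_size rows.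
  rewrite tableau_of_hugger_word // (parity_hugger_word n_eq odd_m rows).
  by rewrite /latin_reading -/(top_row _) -/(bottom_row _) top_row_of_rows ?bottom_row_of_rows.
Qed.
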